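(* For every integer $d\ge2$, the state on $\mathbb{C}^d\otimes\mathbb{C}^d$ $$\Upsilon=\frac{d}{2d-1}P_+ +\frac{1}{2d-1}\sum_{i=1}^{d-1}|i\,0\rangle\langle i\,0|$$ is symmetrically extendible, where $P_+=|\Psi_+\rangle\langle\Psi_+|$, $|\Psi_+\rangle=\frac1{\sqrt d}\sum_{i=0}^{d-1}|ii\rangle$.
   Context: A state $\rho_{AB}$ on $\mathcal{H}_A\otimes\mathcal{H}_B$ is called symmetrically extendible if there is a state $\rho_{ABB'}$ on $\mathcal{H}_A\otimes\mathcal{H}_B\otimes\mathcal{H}_{B'}$, with $\mathcal{H}_{B'}\cong\mathcal{H}_B$, such that $\rho_{ABB'}$ is invariant under the swap of $B$ and $B'$ and $\mathrm{Tr}_{B'}\rho_{ABB'}=\rho_{AB}$. $|i\,0\rangle=|i\rangle_A|0\rangle_B$. *)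

(* Complex scalars: any numeric algebraically closed field C
   (e.g. algC, or R[i] for a real closed field R); conjugation is ^*,
   and 0 <= z means z is real and nonnegative. *)
From mathcomp Require Import all_boot all_order all_algebra.
Set Implicit Arguments. Unset Strict Implicit. Unset Printing Implicit Defensive.
Import Order.TTheory GRing.Theory Num.Theory.
Local Open Scope ring_scope.

(* Operators on the finite-dimensional Hilbert space C^I (I a finite index
   set of an orthonormal basis), given by their matrix entries <x|rho|y>. *)
Definition op (C : numClosedFieldType) (I : finType) := I -> I -> C.

Definition hermitian_op (C : numClosedFieldType) (I : finType) (rho : op C I) :=
  forall x y, rho y x = (rho x y)^*.

Definition psd_op (C : numClosedFieldType) (I : finType) (rho : op C I) :=
  hermitian_op rho /\
  forall v : I -> C, 0 <= \sum_x \sum_y (v x)^* * rho x y * v y.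

Definition trace_op (C : numClosedFieldType) (I : finType) (rho : op C I) :=
  \sum_x rho x x.

Definition is_state (C : numClosedFieldType) (I : finType) (rho : op C I) :=
  psd_op rho /\ trace_op rho = 1.

Definition ptrace_last (C : numClosedFieldType) (IA IB : finType)
  (rho : op C ((IA * IB)%type * IB)%type) : op C (IA * IB)%type :=
  fun x y => \sum_(b : IB) rho (x, b) (y, b).

Definition swapBB'_invariant (C : numClosedFieldType) (IA IB : finType)
  (rho : op C ((IA * IB)%type * IB)%type) :=
  forall a b b' a2 b2 b2',
    rho ((a, b'), b) ((a2, b2'), b2) = rho ((a, b), b') ((a2, b2), b2').

Definition symmetrically_extendible (C : numClosedFieldType) (IA IB : finType)
  (rhoAB : op C (IA * IB)%type) :=
  exists rho : op C ((IA * IB)%type * IB)%type,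
    [/\ is_state rho, swapBB'_invariant rho & ptrace_last rho = rhoAB].

Definition ket2 (C : numClosedFieldType) (d i j : nat) : ('I_d * 'I_d)%type -> C :=
  fun x => ((nat_of_ord x.1 == i) && (nat_of_ord x.2 == j))%:R.

Definition outer (C : numClosedFieldType) (I : finType) (u v : I -> C) : op C I :=
  fun x y => u x * (v y)^*.

Definition Psi_plus (C : numClosedFieldType) (d : nat) : ('I_d * 'I_d)%type -> C :=
  fun x => (sqrtC (d%:R : C))^-1 * \sum_(0 <= i < d) @ket2 C d i i x.

Definition P_plus (C : numClosedFieldType) (d : nat) : op C ('I_d * 'I_d)%type :=
  outer (@Psi_plus C d) (@Psi_plus C d).

Definition Upsilon (C : numClosedFieldType) (d : nat) : op C ('I_d * 'I_d)%type :=
  fun x y => (d%:R / (2 * d - 1)%:R) * @P_plus C d x y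
           + (2 * d - 1)%:R^-1 *
               \sum_(1 <= i < d) outer (@ket2 C d i 0) (@ket2 C d i 0) x y.

From mathcomp Require Import all_boot all_order all_algebra.
From mathcomp Require Import ring zify.
From Stdlib Require Import FunctionalExtensionality.
Import GRing.Theory Num.Theory.
Set Implicit Arguments. Unset Strict Implicit. Unset Printing Implicit Defensive.
Local Open Scope ring_scope.

(* The extension is the pure state of
     |Phi> = sum_i |i i 0> + sum_(i >= 1) |i 0 i>,
   normalized by its squared norm 2d - 1.  The vector |Phi> is symmetric under
   exchanging the last two factors, and tracing out the last factor gives
   sum_(i,j) |ii><jj| + sum_(i >= 1) |i0><i0|, which is (2d - 1) Upsilon. *)

Section KroneckerSums.
Variable C : numClosedFieldType.

Lemma sumr_seq_delta (T : eqType) (s : seq T) (k : T) (F : T -> C) :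
  \sum_(i <- s) (i == k)%:R * F i = (count_mem k s)%:R * F k.
Proof.
elim: s => [|i s IHs]; first by rewrite big_nil mul0r.
rewrite big_cons IHs /= natrD mulrDl.
by case: eqP => [->|_]; rewrite ?mul1r ?mul0r ?add0r.
Qed.

Lemma sumr_delta (T : finType) (k : T) (F : T -> C) :
  \sum_i (i == k)%:R * F i = F k.
Proof. by rewrite sumr_seq_delta count_uniq_mem ?index_enum_uniq ?mem_index_enum ?mul1r. Qed.

Lemma sumr_nat_delta (m n k : nat) (F : nat -> C) :
  \sum_(m <= i < n) (i == k)%:R * F i = (m <= k < n)%N%:R * F k.
Proof. by rewrite sumr_seq_delta count_uniq_mem ?iota_uniq // mem_index_iota. Qed.

End KroneckerSums.

Lemma andb_eq_common (T : eqType) (a b i : T) :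
  (a == i) && (b == i) = (i == a) && (b == a).
Proof. by rewrite eq_sym; case: eqP => // ->. Qed.

Section RankOneOperators.
Variables (C : numClosedFieldType) (I : finType).

Lemma psd_outer_self (v : I -> C) : psd_op (outer v v).
Proof.
split=> [x y|u].
  by rewrite /outer rmorphM /= conjCK mulrC.
have -> : \sum_x \sum_y (u x)^* * outer v v x y * u y
          = (\sum_x (u x)^* * v x) * (\sum_x (u x)^* * v x)^*.
  rewrite mulr_suml; apply: eq_bigr => x _.
  rewrite rmorph_sum mulr_sumr; apply: eq_bigr => y _.
  by rewrite /outer rmorphM /= conjCK; ring.
exact: mul_conjC_ge0.
Qed.

Lemma psd_scale (c : C) (rho : op C I) :
  0 <= c -> psd_op rho -> psd_op (fun x y => c * rho x y).
Proof.
move=> c_ge0 [rho_herm rho_psd]; split=> [x y|v].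
  by rewrite rmorphM /= -rho_herm conj_Creal ?ger0_real.
have -> : \sum_x \sum_y (v x)^* * (c * rho x y) * v y
          = c * \sum_x \sum_y (v x)^* * rho x y * v y.
  rewrite mulr_sumr; apply: eq_bigr => x _.
  by rewrite mulr_sumr; apply: eq_bigr => y _; ring.
exact: mulr_ge0.
Qed.

End RankOneOperators.

Lemma trace_ptrace_last (C : numClosedFieldType) (IA IB : finType)
    (rho : op C ((IA * IB)%type * IB)%type) :
  trace_op (ptrace_last rho) = trace_op rho.
Proof. by rewrite /trace_op /ptrace_last pair_bigA; apply: eq_bigr => -[]. Qed.

Section Upsilon.
Variables (C : numClosedFieldType) (n : nat).

Definition Upsilon_unnorm : op C ('I_n.+1 * 'I_n.+1)%type := fun x y =>
  (x.1 == x.2)%:R * (y.1 == y.2)%:R +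
  ((x.1 == y.1) && (x.1 != ord0) && (x.2 == ord0) && (y.2 == ord0))%:R.

Lemma sum_ket2_diag (x : 'I_n.+1 * 'I_n.+1) :
  \sum_(0 <= i < n.+1) @ket2 C n.+1 i i x = (x.1 == x.2)%:R.
Proof.
under eq_bigr => i _ do rewrite /ket2 andb_eq_common -mulnb natrM.
by rewrite sumr_nat_delta ltn_ord mul1r eq_sym.
Qed.

Lemma sum_outer_ket2_off_diag (x y : 'I_n.+1 * 'I_n.+1) :
  \sum_(1 <= i < n.+1) outer (@ket2 C n.+1 i 0) (@ket2 C n.+1 i 0) x y =
  ((x.1 == y.1) && (x.1 != ord0) && (x.2 == ord0) && (y.2 == ord0))%:R.
Proof.
under eq_bigr => i _ do rewrite /outer /ket2 conjC_nat -natrM mulnb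
  andbACA andb_eq_common -andbA -[in X in X%:R]mulnb natrM.
rewrite sumr_nat_delta ltn_ord andbT lt0n -natrM mulnb.
by rewrite [nat_of_ord y.1 == _]eq_sym andbCA !andbA.
Qed.

Lemma UpsilonE (x y : 'I_n.+1 * 'I_n.+1) :
  @Upsilon C n.+1 x y = (2 * n.+1 - 1)%:R^-1 * Upsilon_unnorm x y.
Proof.
rewrite /Upsilon /P_plus /outer /Psi_plus !sum_ket2_diag sum_outer_ket2_off_diag.
rewrite (@conj_Creal _ ((sqrtC n.+1%:R)^-1 * _)); last first.
  by rewrite ger0_real // mulr_ge0 // ?invr_ge0 ?sqrtC_ge0 ler0n.
have d_sqrt_inv2 : n.+1%:R * ((sqrtC n.+1%:R)^-1 * (sqrtC n.+1%:R)^-1) = 1 :> C.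
  by rewrite -invfM -expr2 sqrtCK mulfV // pnatr_eq0.
rewrite /Upsilon_unnorm mulrDr; congr (_ + _).
by rewrite [X in _ * X = _]mulrACA [LHS]mulrACA d_sqrt_inv2 mul1r.
Qed.

Lemma trace_Upsilon_unnorm : trace_op Upsilon_unnorm = (2 * n.+1 - 1)%:R.
Proof.
have diag_split a b : Upsilon_unnorm (a, b) (a, b) =
    (b == a)%:R * 1 + (b == ord0)%:R * (a != ord0)%:R.
  rewrite /Upsilon_unnorm /= -natrM mulnb andbb eqxx andTb -andbA andbb.
  by rewrite eq_sym mulr1 -natrM mulnb andbC.
transitivity (\sum_a \sum_b Upsilon_unnorm (a, b) (a, b)).
  by rewrite pair_bigA; apply: eq_bigr => -[].
under eq_bigr => a _ do rewrite (eq_bigr _ (fun b _ => diag_split a b)) big_split /= !sumr_delta.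
rewrite big_split /= sumr_const card_ord big_ord_recl eqxx add0r.
under eq_bigr => i _ do rewrite eq_sym neq_lift.
by rewrite sumr_const card_ord -natrD; congr _%:R; lia.
Qed.

Lemma trace_Upsilon : trace_op (@Upsilon C n.+1) = 1.
Proof.
have -> : trace_op (@Upsilon C n.+1) = (2 * n.+1 - 1)%:R^-1 * trace_op Upsilon_unnorm.
  by rewrite /trace_op mulr_sumr; apply: eq_bigr => x _; rewrite UpsilonE.
by rewrite trace_Upsilon_unnorm mulVf // pnatr_eq0; lia.
Qed.

End Upsilon.

Section Extension.
Variables (C : numClosedFieldType) (n : nat).

Definition Phi : ('I_n.+1 * 'I_n.+1) * 'I_n.+1 -> C := fun x =>
  let: (a, b, c) := x in
  ((a == b) && (c == ord0))%:R + ((a == c) && (a != ord0) && (b == ord0))%:R.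

Lemma Phi_swap (a b c : 'I_n.+1) : Phi (a, b, c) = Phi (a, c, b).
Proof.
rewrite /=; case: (eqVneq a ord0) => [->|_]; rewrite ?andbF ?andbT ?addr0.
  by rewrite !(eq_sym ord0) andbC.
by rewrite addrC.
Qed.

Lemma PhiE (a b c : 'I_n.+1) :
  Phi (a, b, c) = (c == ord0)%:R * (a == b)%:R
                    + (c == a)%:R * ((a != ord0) && (b == ord0))%:R.
Proof. by rewrite /= -!natrM !mulnb andbC [c == a]eq_sym andbA. Qed.

Lemma ptrace_outer_Phi (x y : 'I_n.+1 * 'I_n.+1) :
  \sum_c Phi (x, c) * (Phi (y, c))^* = Upsilon_unnorm C x y.
Proof.
case: x y => [a b] [a2 b2].
under eq_bigr => c _ do rewrite !PhiE rmorphD /= !rmorphM /= !conjC_nat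
  mulrDl !mulrDr -!mulrA.
rewrite !big_split /= !sumr_delta /Upsilon_unnorm /= -!natrM !mulnb mul1n mulnb.
case: (eqVneq a2 ord0) => [->|_]; case: (eqVneq a ord0) => [->|_] /=;
  by rewrite ?andbF ?addr0 ?andbT ?mulr0n ?add0r ?andbA ?(andbC (b == ord0)).
Qed.

End Extension.

Theorem mainTheorem4 (C : numClosedFieldType) (d : nat) (hd : (2 <= d)%N) :
  symmetrically_extendible (@Upsilon C d).
Proof.
case: d hd => [//|n] _.
pose rho x y := (2 * n.+1 - 1)%:R^-1 * outer (@Phi C n) (@Phi C n) x y.
have rho_ptrace : ptrace_last rho = @Upsilon C n.+1.
  apply: functional_extensionality => x; apply: functional_extensionality => y.
  by rewrite /ptrace_last -mulr_sumr ptrace_outer_Phi UpsilonE.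
exists rho; split=> //.
- split; first by apply/psd_scale/psd_outer_self; rewrite invr_ge0 ler0n.
  by rewrite -trace_ptrace_last rho_ptrace trace_Upsilon.
- by move=> a b b' a2 b2 b2'; rewrite /rho /outer (Phi_swap _ a) (Phi_swap _ a2).
Qed.
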